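(* Let $\lambda_1\ge0$ and $\lambda_2>0$. Let $P_n$ be the monic polynomials orthogonal with respect to $\langle f,g\rangle_F=\int_{\mathbb R}fg\,e^{-x^4}dx$, $k_n=\langle P_n,P_n\rangle_F$, and $Q_n$ the monic polynomials orthogonal with respect to $\langle f,g\rangle_S=\int_{\mathbb R}fg\,e^{-x^4}dx+\lambda_1f(0)g(0)+\lambda_2f'(0)g'(0)$, $\widehat k_n=\langle Q_n,Q_n\rangle_S$. Then $Q_0(x)=1$, $Q_1(x)=x$, for all $n\ge1$ $$xP_{2n-1}(x)=Q_{2n}(x)+a_nQ_{2n-2}(x),$$ and for all $n\ge2$ $$x^2P_n(x)=Q_{n+2}(x)+b_nQ_n(x)+\alpha_nQ_{n-2}(x),\qquad x^2Q_n(x)=P_{n+2}(x)+\sigma_nP_n(x)+\delta_nP_{n-2}(x),$$ where $a_n=\dfrac{k_{2n-1}}{\widehat k_{2n-2}}$, $\alpha_n=\dfrac{k_n}{\widehat k_{n-2}}$, $b_n=\dfrac{\langle x^2P_n,Q_n\rangle_S}{\langle Q_n,Q_n\rangle_S}$, $\delta_n=\dfrac{\widehat k_n}{k_{n-2}}$, $\sigma_n=b_n\dfrac{\widehat k_n}{k_n}$.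
   Context: All polynomials are real; monic orthogonal polynomials have degree $n$, leading coefficient $1$, and are orthogonal to all polynomials of lower degree in the respective inner product. *)

From HB Require Import structures.
From mathcomp Require Import all_boot all_order all_algebra.
From mathcomp Require Import all_classical all_reals all_analysis.
Set Implicit Arguments. Unset Strict Implicit. Unset Printing Implicit Defensive.
Import Order.TTheory GRing.Theory Num.Theory.
Local Open Scope classical_set_scope.
Local Open Scope ring_scope.

Definition ipF {R : realType} (p q : {poly R}) : R :=
  Rintegral (@lebesgue_measure R) setT
    (fun x : R => p.[x] * q.[x] * expR (- x ^+ 4)).

Definition ipS {R : realType} (l1 l2 : R) (p q : {poly R}) : R :=
  ipF p q + l1 * p.[0] * q.[0] + l2 * (p^`()).[0] * (q^`()).[0].

Definition monic_OPS {R : realType} (ip : {poly R} -> {poly R} -> R)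
    (P : nat -> {poly R}) : Prop :=
  forall n : nat,
    P n \is monic /\ size (P n) = n.+1 /\
    (forall q : {poly R}, (size q <= n)%N -> ip (P n) q = 0).

(* Both forms are symmetric, anisotropic on polynomials and invariant under
   [x -> -x], so each family of monic orthogonal polynomials has the parity of
   its degree.  Multiplication by [x^2] moves between them,
   [<x^2 p, q>_S = <p, x^2 q>_F], because [x^2 p] and its derivative vanish at
   [0]; likewise [<x p, q>_S = <p, x q>_F] when [p(0) = 0], e.g. for odd [p].
   Hence the coefficient of [Q_j] in [x^m P_n] is a multiple of
   [<P_n, x^m Q_j>_F], which vanishes for [j + m < n] by orthogonality and for
   [j] of the wrong parity by symmetry.  What survives is [Q_(n+m)], the term
   [j = n - m] with coefficient [k_n / kh_(n-m)], and for [m = 2] the middle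
   term [b_n Q_n].  Exchanging the two forms gives the expansion of [x^2 Q_n]. *)

From HB Require Import structures.
From mathcomp Require Import all_boot all_order all_algebra.
From mathcomp Require Import all_classical all_reals all_analysis.
From mathcomp Require Import measurable_realfun.
From mathcomp Require Import ring lra zify.

Set Implicit Arguments.
Unset Strict Implicit.
Unset Printing Implicit Defensive.
Import Order.TTheory GRing.Theory Num.Theory numFieldNormedType.Exports.
Local Open Scope classical_set_scope.
Local Open Scope ring_scope.

Section Parity.
Variable R : numDomainType.
Implicit Types p q : {poly R}.

Lemma comp_polyNXK p : (p \Po - 'X) \Po - 'X = p.
Proof.
rewrite -comp_polyA -{2}scaleN1r comp_polyZ comp_polyX scaleN1r opprK.
exact: comp_polyXr.
Qed.

Lemma size_comp_polyNX p : size (p \Po - 'X) = size p.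
Proof. by rewrite size_comp_poly2 // size_polyN size_polyX. Qed.

Lemma lead_coef_comp_polyNX p :
  lead_coef (p \Po - 'X) = (-1) ^+ (size p).-1 * lead_coef p.
Proof.
by rewrite lead_coef_comp ?size_polyN ?size_polyX // lead_coefN lead_coefX mulrC.
Qed.

Definition has_parity (a : nat) p := p \Po - 'X = (-1) ^+ a *: p.

Lemma has_parityX : has_parity 1 'X.
Proof. by rewrite /has_parity comp_polyX expr1 scaleN1r. Qed.

Lemma has_parityM a b p q :
  has_parity a p -> has_parity b q -> has_parity (a + b) (p * q).
Proof.
rewrite /has_parity comp_polyM => -> ->.
by rewrite -scalerAl -scalerAr scalerA -exprD.
Qed.

Lemma has_parityXn m : has_parity m ('X ^+ m).
Proof.
elim: m => [|m IHm]; first by rewrite /has_parity expr0 -polyC1 comp_polyC scale1r.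
by rewrite exprS -add1n; apply: has_parityM; [exact: has_parityX | exact: IHm].
Qed.

Lemma has_parity_horner0 a p : has_parity a p -> odd a -> p.[0] = 0.
Proof.
move=> par_p odd_a; apply/eqP; rewrite -eqNr.
have := congr1 (horner^~ 0) par_p.
by rewrite horner_comp hornerN hornerX oppr0 hornerZ -signr_odd odd_a mulN1r => <-.
Qed.
End Parity.

Lemma size_sub_coef_monic (R : nzRingType) (p q : {poly R}) n :
  q \is monic -> size q = n.+1 -> (size p <= n.+1)%N ->
  (size (p - p`_n *: q)%R <= n)%N.
Proof.
move=> /monicP lead_q size_q size_p; apply/leq_sizeP => j le_nj.
have coef_qn : q`_n = 1 by rewrite -lead_q lead_coefE size_q.
rewrite coefB coefZ; have [->|ne_jn] := eqVneq j n; first by rewrite coef_qn mulr1 subrr.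
have lt_nj : (n < j)%N by rewrite ltn_neqAle eq_sym ne_jn.
have size_q_le : (size q <= j)%N by rewrite size_q.
by rewrite !(nth_default 0 (leq_trans size_p lt_nj)) (nth_default 0 size_q_le) mulr0 subrr.
Qed.

Lemma size_addZ_le (R : nzSemiRingType) N (p q : {poly R}) a :
  (size p <= N)%N -> (size q <= N)%N -> (size (p + a *: q)%R <= N)%N.
Proof.
move=> size_p size_q; rewrite (leq_trans (size_polyD _ _)) // geq_max size_p.
exact: leq_trans (size_scale_leq _ _) size_q.
Qed.

Section AnisotropicForm.
Variable R : realType.
Implicit Types p q r : {poly R}.

Record anisotropic_form (B : {poly R} -> {poly R} -> R) : Prop := AnisotropicForm {
  formC : forall p q, B p q = B q p;
  formDl : forall p1 p2 q, B (p1 + p2) q = B p1 q + B p2 q;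
  formZl : forall a p q, B (a *: p) q = a * B p q;
  form_anisotropic : forall p, p != 0 -> B p p != 0 }.

Definition reflection_invariant (B : {poly R} -> {poly R} -> R) :=
  forall p q, B (p \Po - 'X) (q \Po - 'X) = B p q.

Variable B : {poly R} -> {poly R} -> R.
Hypothesis hB : anisotropic_form B.

Lemma formDr p q1 q2 : B p (q1 + q2) = B p q1 + B p q2.
Proof. by rewrite (formC hB) (formDl hB) !(formC hB _ p). Qed.

Lemma formZr a p q : B p (a *: q) = a * B p q.
Proof. by rewrite (formC hB) (formZl hB) formC. Qed.

Lemma formBl p1 p2 q : B (p1 - p2) q = B p1 q - B p2 q.
Proof. by rewrite (formDl hB) -scaleN1r (formZl hB) mulN1r. Qed.

Lemma form_parity_eq0 a b p q : reflection_invariant B ->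
  has_parity a p -> has_parity b q -> odd (a + b) -> B p q = 0.
Proof.
move=> reflB par_p par_q odd_ab; apply/eqP; rewrite -eqNr; apply/eqP.
rewrite -{1}reflB par_p par_q (formZl hB) formZr mulrA -exprD.
by rewrite -signr_odd odd_ab expr1 mulN1r opprK.
Qed.

Variable P : nat -> {poly R}.
Hypothesis hP : monic_OPS B P.

Lemma OPS_monic n : P n \is monic. Proof. by case: (hP n). Qed.

Lemma OPS_size n : size (P n) = n.+1. Proof. by case: (hP n) => _ []. Qed.

Lemma OPS_orth n q : (size q <= n)%N -> B (P n) q = 0.
Proof. by case: (hP n) => _ [_]; apply. Qed.

Lemma OPS_orth_neq i j : i != j -> B (P i) (P j) = 0.
Proof.
case: ltngtP => // [lt_ij|lt_ji] _; last by rewrite OPS_orth ?OPS_size.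
by rewrite (formC hB) OPS_orth ?OPS_size.
Qed.

Lemma OPS_norm_neq0 n : B (P n) (P n) != 0.
Proof. by apply: form_anisotropic; rewrite // -size_poly_eq0 OPS_size. Qed.

Lemma OPS_form_monic n q : q \is monic -> size q = n.+1 -> B (P n) q = B (P n) (P n).
Proof.
move=> mon_q size_q.
have coef_qn : q`_n = 1 by rewrite -(monicP mon_q) lead_coefE size_q.
have size_r : (size (q - q`_n *: P n)%R <= n)%N.
  by apply: size_sub_coef_monic; rewrite ?OPS_monic ?OPS_size ?size_q.
by rewrite -[q](subrK (q`_n *: P n)) formDr OPS_orth // add0r formZr coef_qn mul1r.
Qed.

Lemma OPS_mulXn_monic m n : 'X ^+ m * P n \is monic.
Proof. by rewrite monicMl ?monicXn ?OPS_monic. Qed.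

Lemma OPS_mulXn_size m n : size ('X ^+ m * P n) = (m + n).+1.
Proof. by rewrite mulrC size_mulXn ?OPS_size ?addnS // -size_poly_eq0 OPS_size. Qed.

Lemma OPS_orth_eq0 N p : (size p <= N)%N ->
  (forall j, (j < N)%N -> B p (P j) = 0) -> p = 0.
Proof.
elim: N p => [|N IHN] p size_p orth_p; first exact/size_poly_leq0P.
have size_r : (size (p - p`_N *: P N)%R <= N)%N.
  by apply: size_sub_coef_monic; rewrite ?OPS_monic ?OPS_size.
have coef_N : p`_N = 0.
  have := orth_p N (ltnSn N).
  rewrite -[p in B p _](subrK (p`_N *: P N)) (formDl hB) (formC hB) OPS_orth //.
  by rewrite add0r (formZl hB) => /eqP; rewrite mulf_eq0 (negbTE (OPS_norm_neq0 N)) orbF => /eqP.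
move: size_r; rewrite coef_N scale0r subr0 => size_p'.
by apply: IHN => // j lt_jN; apply: orth_p; exact: ltnW.
Qed.

Lemma OPS_separates N p q : (size p <= N)%N -> (size q <= N)%N ->
  (forall j, (j < N)%N -> B p (P j) = B q (P j)) -> p = q.
Proof.
move=> size_p size_q eq_pq; apply/eqP; rewrite -subr_eq0; apply/eqP.
apply: (@OPS_orth_eq0 N).
  by rewrite (leq_trans (size_polyD _ _)) // size_polyN geq_max size_p.
by move=> j lt_jN; rewrite formBl eq_pq ?subrr.
Qed.

Lemma OPS0 : P 0 = 1.
Proof.
have := OPS_monic 0; rewrite [P 0]size1_polyC ?OPS_size //.
by rewrite monicE lead_coefC => /eqP ->.
Qed.

Lemma OPS_uniq n q : q \is monic -> size q = n.+1 ->
  (forall r, (size r <= n)%N -> B q r = 0) -> q = P n.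
Proof.
move=> mon_q size_q orth_q; apply: (@OPS_separates n.+1); rewrite ?size_q ?OPS_size //.
move=> j; rewrite ltnS leq_eqVlt => /predU1P[->|lt_jn].
  by rewrite (formC hB) OPS_form_monic.
by rewrite orth_q ?OPS_size // OPS_orth_neq // gtn_eqF.
Qed.

Hypothesis reflB : reflection_invariant B.

Lemma OPS_has_parity n : has_parity n (P n).
Proof.
have sign2 : (-1) ^+ n * (-1) ^+ n = 1 :> R.
  by rewrite -exprD -signr_odd addnn odd_double.
have eq_P : (-1) ^+ n *: (P n \Po - 'X) = P n.
  apply: OPS_uniq.
  - rewrite monicE lead_coefZ lead_coef_comp_polyNX OPS_size.
    by rewrite (monicP (OPS_monic n)) mulr1 sign2.
  - by rewrite size_scale ?signr_eq0 // size_comp_polyNX OPS_size.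
  move=> r size_r; rewrite (formZl hB) -[r]comp_polyNXK reflB OPS_orth ?mulr0 //.
  by rewrite size_comp_polyNX.
by rewrite /has_parity -{2}eq_P scalerA sign2 scale1r.
Qed.

Lemma OPS1 : P 1 = 'X.
Proof.
symmetry; apply: OPS_uniq; rewrite ?monicX ?size_polyX // => r size_r.
apply: (@form_parity_eq0 1 0 _ _ reflB (has_parityX _)) => //.
by rewrite [r]size1_polyC // /has_parity comp_polyC expr0 scale1r.
Qed.
End AnisotropicForm.

Section TwoForms.
Variable R : realType.
Variables (B1 B2 : {poly R} -> {poly R} -> R) (P1 P2 : nat -> {poly R}).
Hypotheses (hB1 : anisotropic_form B1) (hB2 : anisotropic_form B2).
Hypotheses (reflB1 : reflection_invariant B1) (reflB2 : reflection_invariant B2).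
Hypotheses (hP1 : monic_OPS B1 P1) (hP2 : monic_OPS B2 P2).

Lemma form_mulXn_OPS_top m n :
  B1 ('X ^+ m * P2 n) (P1 (m + n)) = B1 (P1 (m + n)) (P1 (m + n)).
Proof.
rewrite (formC hB1) (OPS_form_monic hB1 hP1) ?(OPS_mulXn_monic hP2) //.
exact: (OPS_mulXn_size hP2).
Qed.

Lemma form_mulXn_OPS_parity m n j : odd (m + n + j) ->
  B1 ('X ^+ m * P2 n) (P1 j) = 0.
Proof.
have par_f := has_parityM (has_parityXn _ m) (OPS_has_parity hB2 hP2 reflB2 n).
exact: (form_parity_eq0 hB1 reflB1 par_f (OPS_has_parity hB1 hP1 reflB1 j)).
Qed.

Section Coefficients.
Variables (m n : nat).
Hypothesis adj : forall q, B1 ('X ^+ m * P2 n) q = B2 (P2 n) ('X ^+ m * q).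

Lemma form_mulXn_OPS_low j : (j + m < n)%N -> B1 ('X ^+ m * P2 n) (P1 j) = 0.
Proof. by move=> lt_jmn; rewrite adj (OPS_orth hP2) // (OPS_mulXn_size hP1) addnC. Qed.

Lemma form_mulXn_OPS_edge j : (j + m = n)%N ->
  B1 ('X ^+ m * P2 n) (P1 j) = B2 (P2 n) (P2 n).
Proof.
move=> eq_jmn; rewrite adj (OPS_form_monic hB2 hP2) ?(OPS_mulXn_monic hP1) //.
by rewrite (OPS_mulXn_size hP1) addnC eq_jmn.
Qed.
End Coefficients.

Lemma mulX_OPS_expansion n :
  (forall q, B1 ('X * P2 n.+1) q = B2 (P2 n.+1) ('X * q)) ->
  'X * P2 n.+1 = P1 n.+2 + (B2 (P2 n.+1) (P2 n.+1) / B1 (P1 n) (P1 n)) *: P1 n.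
Proof.
rewrite -[X in X * P2 _ = _]expr1 => adj; apply: (OPS_separates hB1 hP1 (N := n.+3)).
- by rewrite (OPS_mulXn_size hP2).
- by rewrite size_addZ_le ?(OPS_size hP1) //; lia.
move=> j lt_j; rewrite (formDl hB1) (formZl hB1).
have orth i k : i != k -> B1 (P1 i) (P1 k) = 0 by apply: (OPS_orth_neq hB1 hP1).
have [lt_jn | [-> | [-> | odd_nj]]] :
    (j < n \/ j = n \/ j = n.+2 \/ odd (n + j))%N by lia.
- rewrite (form_mulXn_OPS_low (m := 1) adj) ?addn1 // !(orth _ j) ?mulr0 ?addr0 //; lia.
- rewrite (form_mulXn_OPS_edge (m := 1) adj) ?addn1 // (orth n.+2) ?add0r; last lia.
  by rewrite divfK ?(OPS_norm_neq0 hB1 hP1).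
- rewrite (form_mulXn_OPS_top 1 n.+1) (orth n n.+2) ?mulr0 ?addr0 //; lia.
- rewrite form_mulXn_OPS_parity ?(orth _ j) ?mulr0 ?addr0 //; lia.
Qed.

Lemma mulX2_OPS_expansion n :
  (forall q, B1 ('X ^+ 2 * P2 n.+2) q = B2 (P2 n.+2) ('X ^+ 2 * q)) ->
  'X ^+ 2 * P2 n.+2 =
    P1 n.+4 + (B1 ('X ^+ 2 * P2 n.+2) (P1 n.+2) / B1 (P1 n.+2) (P1 n.+2)) *: P1 n.+2
    + (B2 (P2 n.+2) (P2 n.+2) / B1 (P1 n) (P1 n)) *: P1 n.
Proof.
move=> adj; apply: (OPS_separates hB1 hP1 (N := n + 5)).
- by rewrite (OPS_mulXn_size hP2); lia.
- by rewrite !size_addZ_le ?(OPS_size hP1) //; lia.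
move=> j lt_j; rewrite !(formDl hB1) !(formZl hB1).
have orth i k : i != k -> B1 (P1 i) (P1 k) = 0 by apply: (OPS_orth_neq hB1 hP1).
have [lt_jn | [-> | [-> | [-> | odd_nj]]]] :
    (j < n \/ j = n \/ j = n.+2 \/ j = n.+4 \/ odd (n + j))%N by lia.
- rewrite (form_mulXn_OPS_low adj) ?addn2 // !(orth _ j) ?mulr0 ?addr0 //; lia.
- rewrite (form_mulXn_OPS_edge adj) ?addn2 // (orth n.+4) ?(orth n.+2 n); try lia.
  by rewrite mulr0 !add0r divfK ?(OPS_norm_neq0 hB1 hP1).
- rewrite (orth n.+4) ?(orth n n.+2); try lia.
  by rewrite mulr0 addr0 add0r divfK ?(OPS_norm_neq0 hB1 hP1).
- rewrite (form_mulXn_OPS_top 2 n.+2) (orth n.+2 n.+4) ?(orth n n.+4); try lia.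
  by rewrite !mulr0 !addr0.
- rewrite form_mulXn_OPS_parity ?(orth _ j) ?mulr0 ?addr0 //; lia.
Qed.
End TwoForms.

Section FreudIntegral.
Variable R : realType.
Local Notation mu := (@lebesgue_measure R).
Implicit Types p q r : {poly R}.

Lemma ge0_integral_split0 (h : R -> R) : continuous h -> (forall x, 0 <= h x) ->
  (\int[mu]_x (h x)%:E =
   \int[mu]_(x in `]-oo, 0%R]) (h x)%:E + \int[mu]_(x in `[0%R, +oo[) (h x)%:E)%E.
Proof.
move=> ch h_ge0; have mh : measurable_fun [set: R] h := continuous_measurable_fun ch.
rewrite -(setUv `[0%R, +oo[) ge0_integral_setU //=; last 4 first.
- exact: measurableC.
- by apply/measurable_EFinP; rewrite setUv.
- by move=> x _; rewrite lee_fin.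
- exact/disj_setPCl.
rewrite setCitvr integral_itv_bndo_bndc; first exact: addeC.
exact/measurable_EFinP/measurable_funTS.
Qed.

Lemma ge0_integral_reflect (h : R -> R) : continuous h -> (forall x, 0 <= h x) ->
  (\int[mu]_x (h (- x))%:E = \int[mu]_x (h x)%:E)%E.
Proof.
move=> ch h_ge0.
have chN : continuous (h \o -%R).
  by move=> x; apply: continuous_comp; [exact: continuousN | exact: ch].
rewrite (ge0_integral_split0 chN (fun x => h_ge0 _)) (ge0_integral_split0 ch h_ge0).
have substNy (G : R -> R) : continuous G -> (forall x, 0 <= G x) ->
    (\int[mu]_(x in `]-oo, 0%R]) (G x)%:E = \int[mu]_(x in `[0%R, +oo[) (G (- x))%:E)%E.
  move=> cG G_ge0; have := @ge0_integration_by_substitutionNy R G 0.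
  by rewrite oppr0 => -> //; exact: continuous_subspaceT.
rewrite (substNy _ chN (fun x => h_ge0 _)) (substNy _ ch h_ge0) addeC.
by congr (_ + _)%E; apply: eq_integral => x _ /=; rewrite opprK.
Qed.

Lemma integral_reflect (g : R -> R) : continuous g ->
  (\int[mu]_x (g (- x))%:E = \int[mu]_x (g x)%:E)%E.
Proof.
have reflect_pos (h : R -> R) : continuous h ->
    (\int[mu]_x (Num.max (h (- x)) 0)%:E = \int[mu]_x (Num.max (h x) 0)%:E)%E.
  move=> ch; apply: (ge0_integral_reflect (h := fun x => Num.max (h x) 0)).
    by move=> x; exact: (max_fun_continuous ch (@cst_continuous _ _ 0)).
  by move=> x; rewrite le_max lexx orbT.
move=> cg; rewrite integralE [RHS]integralE; congr (_ - _)%E.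
- transitivity (\int[mu]_x (Num.max (g (- x)) 0)%:E)%E.
    by apply: eq_integral => x _; rewrite funeposE EFin_max.
  by rewrite reflect_pos //; apply: eq_integral => x _; rewrite funeposE EFin_max.
- transitivity (\int[mu]_x (Num.max (- g (- x)) 0)%:E)%E.
    by apply: eq_integral => x _; rewrite funenegE EFin_max.
  rewrite (reflect_pos (fun x => - g x)); last by move=> x; apply/continuousN/cg.
  by apply: eq_integral => x _; rewrite funenegE EFin_max.
Qed.

Lemma continuous_horner_freud p : continuous (fun x => p.[x] * expR (- x ^+ 4)).
Proof.
move=> x; apply: continuousM; first exact: continuous_horner.
apply: (@continuous_comp _ _ _ (fun x : R => - x ^+ 4) expR); last exact: continuous_expR.
have -> : (fun x : R => - x ^+ 4) = horner (- 'X ^+ 4).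
  by apply: funext => y; rewrite hornerN hornerXn.
exact: continuous_horner.
Qed.

(* [p] grows at most like [(1 + x^2)^N], which [expR (1 + x^2)] dominates;
   the remaining [expR (1 + x^2 - x^4)] is at most [expR (2 - x^2)]. *)
Lemma horner_freud_le_gauss p x :
  `|p.[x] * expR (- x ^+ 4)| <=
    (\sum_(i < size p) `|p`_i|) * (size p).+1`!%:R * expR 2 * gauss_fun x.
Proof.
set y := 1 + x ^+ 2; set N := (size p).+1.
have y_ge1 : 1 <= y by rewrite lerDl sqr_ge0.
have normx_le : `|x| <= y.
  rewrite /y -real_normK ?num_real //; have := normr_ge0 x; nra.
have horner_le : `|p.[x]| <= (\sum_(i < size p) `|p`_i|) * y ^+ N.
  rewrite horner_coef mulr_suml; apply: le_trans (ler_norm_sum _ _ _) _.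
  apply: ler_sum => i _; rewrite normrM normrX ler_wpM2l //.
  apply: le_trans (lerXn2r _ _ _ normx_le) (ler_weXn2l y_ge1 _) => //.
  - by rewrite nnegrE (le_trans ler01).
  - exact: leq_trans (ltnW (ltn_ord i)) (leqnSn _).
have pow_le : y ^+ N <= N`!%:R * expR y.
  have := expR_ge1Dxn (size p) (le_trans ler01 y_ge1).
  by rewrite -ler_pdivrMl ?ltr0n ?fact_gt0 // mulrC; apply: le_trans; rewrite lerDr.
have exp_le : expR y * expR (- x ^+ 4) <= expR 2 * gauss_fun x.
  rewrite /gauss_fun -!expRD ler_expR /y.
  have -> : x ^+ 4 = x ^+ 2 * x ^+ 2 by rewrite -exprD.
  have := sqr_ge0 (x ^+ 2 - 1); rewrite expr2; nra.
rewrite normrM (ger0_norm (expR_ge0 _)).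
apply: le_trans (ler_wpM2r (expR_ge0 _) horner_le) _.
rewrite -!mulrA; apply: ler_wpM2l; first by apply: sumr_ge0 => i _; exact: normr_ge0.
apply: le_trans (ler_wpM2r (expR_ge0 _) pow_le) _.
by rewrite -mulrA; apply: ler_wpM2l.
Qed.

Lemma integrable_horner_freud p :
  mu.-integrable setT (EFin \o (fun x => p.[x] * expR (- x ^+ 4))).
Proof.
set C := (\sum_(i < size p) `|p`_i|) * (size p).+1`!%:R * expR 2.
have C_ge0 : 0 <= C by rewrite !mulr_ge0 ?sumr_ge0 ?expR_ge0.
apply: (@le_integrable _ _ _ mu setT _ _ (fun x => C%:E * (EFin \o gauss_fun) x)%E) => //.
- by apply/measurable_EFinP; exact: continuous_measurable_fun (@continuous_horner_freud p).
- move=> x _; rewrite /comp -EFinM !abse_EFin lee_fin.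
  by rewrite (ger0_norm (mulr_ge0 C_ge0 (gauss_fun_ge0 _))) horner_freud_le_gauss.
- exact: integrableZl integrableT_gauss.
Qed.

Lemma Rintegral_continuous_gt0 (g : R -> R) x0 :
  continuous g -> (forall x, 0 <= g x) -> 0 < g x0 ->
  mu.-integrable setT (EFin \o g) -> 0 < \int[mu]_(x in setT) g x.
Proof.
move=> cg g_ge0 gx0 ig; have mg := continuous_measurable_fun cg.
have [e e_gt0 near_x0] : exists2 e : R, 0 < e & forall y, `|x0 - y| < e -> g x0 / 2 < g y.
  have : \forall t \near x0, g x0 / 2 < g t by apply: (cvgr_gt (g x0) (cg x0)); lra.
  by case/nbhs_ballP => e e_gt0 H; exists e => // y; apply: H.
have int_ge0 : (0 <= \int[mu]_x (g x)%:E)%E by apply: integral_ge0 => x _; rewrite lee_fin.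
apply: fine_gt0; apply/andP; split; last first.
  by rewrite -ge0_fin_numE // (integrable_fin_num measurableT ig).
set c := g x0 / 2.
apply: (@lt_le_trans _ _ (c * (2 * e))%:E); first by rewrite lte_fin !mulr_gt0 //; lra.
have sub_le : (\int[mu]_(x in `](x0 - e)%R, (x0 + e)%R[) (g x)%:E <= \int[mu]_x (g x)%:E)%E.
  apply: ge0_subset_integral => //; last by move=> x _; rewrite lee_fin.
  exact/measurable_EFinP.
apply: le_trans sub_le.
have -> : (c * (2 * e))%:E = (\int[mu]_(x in `](x0 - e)%R, (x0 + e)%R[) (cst c%:E) x)%E.
  rewrite integral_cst //= lebesgue_measure_itv /= lte_fin ifT; last lra.
  by rewrite -EFinD -EFinM; congr EFin; congr (_ * _); lra.
apply: ge0_le_integral => //.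
- by move=> x _; rewrite lee_fin /c; lra.
- exact/measurable_funTS/measurable_EFinP.
- move=> x /=; rewrite in_itv /= => /andP[? ?]; rewrite lee_fin ltW //.
  by apply: near_x0; rewrite ltr_norml; apply/andP; split; lra.
Qed.

Lemma ipFE p q : ipF p q = \int[mu]_(x in setT) ((p * q).[x] * expR (- x ^+ 4)).
Proof. by rewrite /ipF; congr Rintegral; apply: funext => x; rewrite hornerM. Qed.

Lemma ipFC p q : ipF p q = ipF q p.
Proof. by rewrite !ipFE mulrC. Qed.

Lemma ipFDl p1 p2 q : ipF (p1 + p2) q = ipF p1 q + ipF p2 q.
Proof.
rewrite !ipFE -RintegralD ?integrable_horner_freud //.
by congr Rintegral; apply: funext => x; rewrite mulrDl hornerD mulrDl.
Qed.

Lemma ipFZl a p q : ipF (a *: p) q = a * ipF p q.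
Proof.
rewrite !ipFE -RintegralZl ?integrable_horner_freud //.
by congr Rintegral; apply: funext => x; rewrite -scalerAl hornerZ mulrA.
Qed.

Lemma ipF_mulLR r p q : ipF (r * p) q = ipF p (r * q).
Proof. by rewrite !ipFE mulrCA mulrA. Qed.

Lemma ipF_reflect : reflection_invariant (@ipF R).
Proof.
move=> p q; rewrite !ipFE -comp_polyM /Rintegral.
rewrite -(integral_reflect (@continuous_horner_freud (p * q))).
congr fine; apply: eq_integral => x _.
have even4 : (- x) ^+ 4 = x ^+ 4 by rewrite -[4%N]/(2 * 2)%N !exprM sqrrN.
by rewrite horner_comp hornerN hornerX even4.
Qed.

Lemma ipF_gt0 p : p != 0 -> 0 < ipF p p.
Proof.
move=> p_neq0; have [x0 px0_neq0] : exists x0, p.[x0] != 0.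
  have : ~~ all (root p) [seq i%:R | i <- iota 0 (size p)].
    apply: contra p_neq0 => all_roots; apply/eqP/(roots_geq_poly_eq0 all_roots).
      by rewrite map_inj_uniq ?iota_uniq //; exact: (mulrIn (oner_neq0 R)).
    by rewrite size_map size_iota.
  by case/allPn => x _ not_root; exists x.
rewrite ipFE; apply: (Rintegral_continuous_gt0 (x0 := x0)).
- exact: continuous_horner_freud.
- by move=> x; rewrite hornerM mulr_ge0 ?expR_ge0 // -expr2 sqr_ge0.
- by rewrite hornerM mulr_gt0 ?expR_gt0 // -expr2 exprn_even_gt0.
- exact: integrable_horner_freud.
Qed.

Lemma ipF_anisotropic : anisotropic_form (@ipF R).
Proof.
split; [exact: ipFC | exact: ipFDl | exact: ipFZl |].
by move=> p /ipF_gt0 /lt0r_neq0.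
Qed.

Variables l1 l2 : R.

Lemma ipSC p q : ipS l1 l2 p q = ipS l1 l2 q p.
Proof. by rewrite /ipS ipFC; ring. Qed.

Lemma ipS_anisotropic : 0 <= l1 -> 0 <= l2 -> anisotropic_form (ipS l1 l2).
Proof.
move=> l1_ge0 l2_ge0; split.
- exact: ipSC.
- by move=> p1 p2 q; rewrite /ipS ipFDl derivD !hornerD; ring.
- by move=> a p q; rewrite /ipS ipFZl derivZ !hornerZ; ring.
move=> p /ipF_gt0 ipF_gt0; apply: lt0r_neq0; rewrite /ipS.
have sq0 : 0 <= l1 * p.[0] * p.[0] by rewrite -mulrA mulr_ge0 // -expr2 sqr_ge0.
have dsq0 : 0 <= l2 * p^`().[0] * p^`().[0] by rewrite -mulrA mulr_ge0 // -expr2 sqr_ge0.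
lra.
Qed.

Lemma ipS_reflect : reflection_invariant (ipS l1 l2).
Proof.
move=> p q; rewrite /ipS ipF_reflect !deriv_comp derivN derivX.
by rewrite !hornerM !horner_comp !hornerN hornerX oppr0 hornerC; ring.
Qed.

Lemma ipS_ipF r q : r.[0] = 0 -> r^`().[0] = 0 -> ipS l1 l2 r q = ipF r q.
Proof. by move=> r0 dr0; rewrite /ipS r0 dr0 !(mulr0, mul0r, addr0). Qed.

Lemma ipS_mulX p q : p.[0] = 0 -> ipS l1 l2 ('X * p) q = ipF p ('X * q).
Proof.
move=> p0; rewrite ipS_ipF ?ipF_mulLR //; first by rewrite hornerM hornerX mul0r.
by rewrite derivM derivX hornerD !hornerM hornerX p0 hornerC !(mul0r, mulr0, addr0).
Qed.

Lemma ipS_mulX2 p q : ipS l1 l2 ('X ^+ 2 * p) q = ipF p ('X ^+ 2 * q).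
Proof.
rewrite ipS_ipF ?ipF_mulLR //; first by rewrite hornerM hornerXn expr0n mul0r.
rewrite derivM derivXn hornerD !hornerM hornerMn hornerXn !expr0n /=.
by rewrite !(mul0r, mulr0, mul0rn, addr0).
Qed.

Lemma ipF_mulX2 p q : ipF ('X ^+ 2 * p) q = ipS l1 l2 p ('X ^+ 2 * q).
Proof. by rewrite ipSC ipS_mulX2 ipFC. Qed.
End FreudIntegral.

Theorem mainTheorem6 (R : realType) (l1 l2 : R) (P Q : nat -> {poly R}) :
  0 <= l1 -> 0 < l2 ->
  monic_OPS ipF P -> monic_OPS (ipS l1 l2) Q ->
  let k := fun n => ipF (P n) (P n) in
  let kh := fun n => ipS l1 l2 (Q n) (Q n) in
  let b := fun n => ipS l1 l2 ('X ^+ 2 * P n) (Q n) / ipS l1 l2 (Q n) (Q n) in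
  [/\ Q 0%N = 1, Q 1%N = 'X,
      (forall n : nat, (1 <= n)%N ->
         'X * P (2 * n - 1)%N
         = Q (2 * n)%N + (k (2 * n - 1)%N / kh (2 * n - 2)%N) *: Q (2 * n - 2)%N),
      (forall n : nat, (2 <= n)%N ->
         'X ^+ 2 * P n = Q n.+2 + b n *: Q n + (k n / kh (n - 2)%N) *: Q (n - 2)%N)
    & (forall n : nat, (2 <= n)%N ->
         'X ^+ 2 * Q n = P n.+2 + (b n * (kh n / k n)) *: P n
                         + (kh n / k (n - 2)%N) *: P (n - 2)%N)].
Proof.
move=> l1_ge0 l2_gt0 hP hQ k kh b.
have hF := @ipF_anisotropic R; have hS := ipS_anisotropic l1_ge0 (ltW l2_gt0).
have reflF := @ipF_reflect R; have reflS := ipS_reflect l1 l2.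
split.
- exact: (OPS0 hQ).
- exact: (OPS1 hS hQ reflS).
- case=> [//|n] _; rewrite /k /kh.
  have -> : (2 * n.+1 - 1 = (2 * n).+1)%N by lia.
  have -> : (2 * n.+1 - 2 = 2 * n)%N by lia.
  have -> : (2 * n.+1 = (2 * n).+2)%N by lia.
  apply: (mulX_OPS_expansion hS hF reflS reflF hQ hP) => q; apply: ipS_mulX.
  by rewrite (has_parity_horner0 (OPS_has_parity hF hP reflF _)) //= mul2n odd_double.
- case=> [|[|n]] // _; rewrite /k /kh /b !subSS subn0.
  exact: (mulX2_OPS_expansion hS hF reflS reflF hQ hP) (ipS_mulX2 l1 l2 _).
- case=> [|[|n]] // _; rewrite /k /kh /b !subSS subn0.
  have -> : b n.+2 * (kh n.+2 / k n.+2) = ipF ('X ^+ 2 * Q n.+2) (P n.+2) / k n.+2.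
    by rewrite /b /kh mulrA divfK ?(OPS_norm_neq0 hS hQ) // (ipF_mulX2 l1 l2) (formC hS).
  exact: (mulX2_OPS_expansion hF hS reflF reflS hP hQ) (ipF_mulX2 l1 l2 _).
Qed.
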